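(* Let $d,n\ge 1$, let $\boldsymbol{a}_1,\ldots,\boldsymbol{a}_n\in\mathbf{R}^d$, let $w_1,\ldots,w_n>0$, fix $\varepsilon>0$ and $0<p\le 2$. Let $\boldsymbol{x}^{(0)}\in\mathbf{R}^d$ be arbitrary and define, for $t\ge 0$, $$\mu_j^{(t)}=w_j\,(\lVert\boldsymbol{x}^{(t)}-\boldsymbol{a}_j\rVert^2+\varepsilon)^{p/2-1},\qquad \boldsymbol{x}^{(t+1)}=\frac{\sum_j\mu_j^{(t)}\boldsymbol{a}_j}{\sum_j\mu_j^{(t)}}.$$ Then $\lVert\boldsymbol{x}^{(t)}-\boldsymbol{x}^{(t+1)}\rVert\to 0$ as $t\to\infty$.
   Context: $\lVert\cdot\rVert$ is the Euclidean norm on $\mathbf{R}^d$. *)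

From HB Require Import structures.
From mathcomp Require Import all_boot all_order all_algebra.
From mathcomp Require Import all_classical all_reals all_analysis.
Set Implicit Arguments. Unset Strict Implicit. Unset Printing Implicit Defensive.
Import Order.TTheory GRing.Theory Num.Theory.
Local Open Scope ring_scope.

Section Weiszfeld.
Variable R : realType.

Definition enorm (d : nat) (v : 'rV[R]_d) : R :=
  Num.sqrt (\sum_(i < d) v 0 i ^+ 2).

Definition irls_mu (d n : nat) (a : 'I_n -> 'rV[R]_d) (w : 'I_n -> R)
  (eps p : R) (x : 'rV[R]_d) (j : 'I_n) : R :=
  w j * powR (enorm (x - a j) ^+ 2 + eps) (p / 2 - 1).

Definition irls_step (d n : nat) (a : 'I_n -> 'rV[R]_d) (w : 'I_n -> R)
  (eps p : R) (x : 'rV[R]_d) : 'rV[R]_d :=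
  (\sum_(j < n) irls_mu a w eps p x j)^-1 *:
    \sum_(j < n) (irls_mu a w eps p x j *: a j).

Definition irls_seq (d n : nat) (a : 'I_n -> 'rV[R]_d) (w : 'I_n -> R)
  (eps p : R) (x0 : 'rV[R]_d) (t : nat) : 'rV[R]_d :=
  iter t (irls_step a w eps p) x0.

End Weiszfeld.

From mathcomp Require Import all_boot all_order all_algebra.
From mathcomp Require Import all_classical all_reals all_analysis.
From mathcomp Require Import ring lra.
Import Order.TTheory GRing.Theory Num.Theory.
Import numFieldNormedType.Exports.
Local Open Scope ring_scope.
Local Open Scope classical_set_scope.
Set Implicit Arguments. Unset Strict Implicit.

(** The iteration is a majorize-minimize scheme for the smoothed objective
  [F x = sum_j w_j (|x - a_j|^2 + eps)^(p/2)].  Since [s |-> s^(p/2)] is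
  concave, its tangent at [|x - a_j|^2 + eps] majorizes it, so [F] is bounded
  above by a quadratic with weights [(p/2) mu_j], minimized at the weighted
  mean [x'].  The parallel axis identity then gives
  [F x' + (p/2) (sum_j mu_j) |x - x'|^2 <= F x].  Being weighted means of the
  [a_j], the iterates stay bounded, and since [p/2 - 1 <= 0] this keeps
  [sum_j mu_j] bounded away from [0].  As [F >= 0], the decreases
  [F x^(t) - F x^(t+1)] tend to [0], and so does [|x^(t) - x^(t+1)|^2]. *)

Section WeightedMean.
Variables (F : fieldType) (d n : nat).

Definition sqnorm (v : 'rV[F]_d) : F := \sum_(i < d) v 0 i ^+ 2.

Definition wmean (mu : 'I_n -> F) (b : 'I_n -> 'rV[F]_d) : 'rV[F]_d :=
  (\sum_j mu j)^-1 *: \sum_j (mu j *: b j).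

Lemma sqnormC (u v : 'rV[F]_d) : sqnorm (u - v) = sqnorm (v - u).
Proof. by apply: eq_bigr => i _; rewrite !mxE -sqrrN opprB. Qed.

Lemma weighted_sum_sqrB_mean (mu b : 'I_n -> F) (y : F) :
  \sum_j mu j != 0 ->
  let m := (\sum_j mu j)^-1 * \sum_j (mu j * b j) in
  \sum_j mu j * (y - b j) ^+ 2 =
  \sum_j mu j * (m - b j) ^+ 2 + (\sum_j mu j) * (y - m) ^+ 2.
Proof.
move=> M0 m.
set M := \sum_j mu j; set S := \sum_j (mu j * b j).
set T := \sum_j (mu j * b j ^+ 2).
have expand z : \sum_j mu j * (z - b j) ^+ 2 = z ^+ 2 * M - 2 * z * S + T.
  rewrite /M /S /T 2!mulr_sumr -sumrB -big_split /=.
  by apply: eq_bigr => j _; ring.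
have Mm : S = M * m by rewrite /m mulrA mulfV // mul1r.
by rewrite !expand Mm; ring.
Qed.

Lemma weighted_sum_sqnormB_wmean (mu : 'I_n -> F) (b : 'I_n -> 'rV[F]_d)
    (y : 'rV[F]_d) : \sum_j mu j != 0 ->
  \sum_j mu j * sqnorm (y - b j) =
  \sum_j mu j * sqnorm (wmean mu b - b j)
  + (\sum_j mu j) * sqnorm (y - wmean mu b).
Proof.
move=> M0; have wmeanE i :
    wmean mu b 0 i = (\sum_j mu j)^-1 * \sum_j (mu j * b j 0 i).
  by rewrite mxE summxE; congr (_ * _); apply: eq_bigr => j _; rewrite mxE.
set m := wmean mu b in wmeanE *; clearbody m.
rewrite /sqnorm; under eq_bigr do rewrite mulr_sumr.
under [X in _ = X + _]eq_bigr do rewrite mulr_sumr.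
rewrite mulr_sumr exchange_big [X in _ = X + _]exchange_big -big_split /=.
apply: eq_bigr => i _; under eq_bigr do rewrite !mxE.
under [X in _ = X + _]eq_bigr do rewrite !mxE.
by rewrite !mxE wmeanE; apply: weighted_sum_sqrB_mean.
Qed.

End WeightedMean.

Section RealFacts.
Variable R : realType.

Lemma sqnorm_ge0 d (v : 'rV[R]_d) : 0 <= sqnorm v.
Proof. by apply: sumr_ge0 => i _; exact: sqr_ge0. Qed.

Lemma enorm_sqr d (v : 'rV[R]_d) : enorm v ^+ 2 = sqnorm v.
Proof. by rewrite /enorm sqr_sqrtr // sqnorm_ge0. Qed.

(* Concavity of [s |-> s `^ q]; the case [q < 1] is Young's inequality for
   the conjugate exponents [1/q] and [1/(1-q)] applied to [(s'/s) `^ q] and [1]. *)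
Lemma powR_le_tangent (s s' q : R) : 0 < s -> 0 < s' -> 0 < q -> q <= 1 ->
  s' `^ q <= s `^ q + q * s `^ (q - 1) * (s' - s).
Proof.
move=> s0 s'0 q0 q1.
have [->|qN1] := eqVneq q 1.
  by rewrite subrr powRr0 (powRr1 (ltW s0)) (powRr1 (ltW s'0)); lra.
have q1' : q < 1 by rewrite lt_neqAle qN1 q1.
set r := s' / s; have r0 : 0 < r by rewrite divr_gt0.
have young : r `^ q <= r * q + (1 - q).
  have := @conjugate_powR R (r `^ q) 1 (q^-1) ((1 - q)^-1) (powR_ge0 _ _) ler01.
  rewrite !invr_gt0 q0 subr_gt0 q1' !invrK addrC subrK => /(_ isT isT erefl).
  by rewrite -powRrM mulfV ?gt_eqF // powRr1 ?(ltW r0) // powR1 !mul1r mulr1.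
have -> : s' = r * s by rewrite /r mulrVK ?unitfE ?gt_eqF.
rewrite (powRM _ (ltW r0) (ltW s0)) powRB ?(powRr1 (ltW s0)); last first.
  by apply/implyP => _; rewrite gt_eqF.
have -> : s `^ q + q * (s `^ q / s) * (r * s - s) = s `^ q * (q * r + (1 - q)).
  by field; rewrite gt_eqF.
by rewrite mulrC ler_pM2l ?powR_gt0 // mulrC.
Qed.

Lemma le0_ger_powR (x y e : R) : 0 < x -> x <= y -> e <= 0 ->
  y `^ e <= x `^ e.
Proof.
move=> x0 xy e0; have y0 : 0 < y := lt_le_trans x0 xy.
rewrite -[e]opprK [y `^ _]powRN [x `^ _]powRN lef_pV2 ?posrE ?powR_gt0 //.
by apply: ge0_ler_powR xy; rewrite ?oppr_ge0 // nnegrE ltW.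
Qed.

Lemma descent_cvg0 (G u : nat -> R) (c : R) : 0 < c ->
  (forall t, 0 <= G t) -> (forall t, 0 <= u t) ->
  (forall t, c * u t <= G t - G t.+1) -> u @ \oo --> (0 : R).
Proof.
move=> c0 G0 u0 Gdec.
have Gni : nonincreasing_seq G.
  apply/nonincreasing_seqP => t; rewrite -subr_ge0.
  exact: le_trans (mulr_ge0 (ltW c0) (u0 t)) (Gdec t).
have Gcv : cvgn G.
  by apply: nonincreasing_is_cvgn => //; exists 0 => _ [t _ <-].
have GB0 : (fun t => G t - G t.+1) @ \oo --> (0 : R).
  have GS : (fun t => G t.+1) @ \oo --> limn G by rewrite cvg_shiftS.
  by have := cvgB Gcv GS; rewrite subrr; apply.
apply: (@squeeze_cvgr _ _ _ _ (fun=> 0) (fun t => c^-1 * (G t - G t.+1))).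
- by near=> t; rewrite u0 /= ler_pdivlMl.
- exact: cvg_cst.
- by rewrite -(mulr0 c^-1); apply: cvgM => //; exact: cvg_cst.
Unshelve. all: by end_near.
Qed.

End RealFacts.

Section Weiszfeld.
Variables (R : realType) (d n : nat) (a : 'I_n -> 'rV[R]_d) (w : 'I_n -> R).
Variables (eps p : R).
Hypotheses (w_gt0 : forall j, 0 < w j) (eps_gt0 : 0 < eps).

Local Notation mu := (irls_mu a w eps p).
Local Notation step := (irls_step a w eps p).

Definition irls_obj (x : 'rV[R]_d) : R :=
  \sum_j w j * (sqnorm (x - a j) + eps) `^ (p / 2).

Lemma irls_obj_ge0 x : 0 <= irls_obj x.
Proof. by apply: sumr_ge0 => j _; rewrite mulr_ge0 ?powR_ge0 ?ltW. Qed.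

Lemma irls_mu_gt0 x j : 0 < mu x j.
Proof.
by rewrite /irls_mu mulr_gt0 // powR_gt0 // enorm_sqr ltr_wpDl ?sqnorm_ge0.
Qed.

Lemma irls_mu_le_sum x j : mu x j <= \sum_i mu x i.
Proof.
rewrite (bigD1 j) //= lerDl.
by apply: sumr_ge0 => i _; exact: ltW (irls_mu_gt0 x i).
Qed.

Lemma sum_irls_mu_gt0 x (j0 : 'I_n) : 0 < \sum_j mu x j.
Proof. exact: lt_le_trans (irls_mu_gt0 x j0) (irls_mu_le_sum x j0). Qed.

Lemma irls_stepE x : step x = wmean (mu x) a.
Proof. by []. Qed.

Lemma irls_obj_descent x (j0 : 'I_n) : 0 < p -> p <= 2 ->
  irls_obj (step x) + p / 2 * (\sum_j mu x j) * sqnorm (x - step x)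
    <= irls_obj x.
Proof.
move=> p0 p2; set q := p / 2.
have q0 : 0 < q by rewrite divr_gt0.
have q1 : q <= 1 by rewrite ler_pdivrMr //= mul1r.
have parallel_axis :=
  weighted_sum_sqnormB_wmean a x (lt0r_neq0 (sum_irls_mu_gt0 x j0)).
rewrite -irls_stepE in parallel_axis.
have majorize : irls_obj (step x) <= \sum_j (w j * (sqnorm (x - a j) + eps) `^ q
    + q * (mu x j * (sqnorm (step x - a j) - sqnorm (x - a j)))).
  apply: ler_sum => j _; rewrite /irls_mu enorm_sqr.
  have := @powR_le_tangent R (sqnorm (x - a j) + eps)
    (sqnorm (step x - a j) + eps) q.
  rewrite !ltr_wpDl ?sqnorm_ge0 // => /(_ isT isT q0 q1).
  by move/(ler_wpM2l (ltW (w_gt0 j))); rewrite /q; lra.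
move: majorize; rewrite big_split /= -mulr_sumr.
under [X in _ <= _ + _ * X]eq_bigr do rewrite mulrBr.
by rewrite sumrB parallel_axis -/q /irls_obj; lra.
Qed.

Lemma sqnorm_irls_step_le x k :
  sqnorm (step x - a k) <= \sum_j sqnorm (a k - a j).
Proof.
have M_gt0 := sum_irls_mu_gt0 x k.
rewrite sqnormC -(ler_pM2l M_gt0).
apply: (@le_trans _ _ (\sum_j mu x j * sqnorm (a k - a j))).
  rewrite (weighted_sum_sqnormB_wmean _ _ (lt0r_neq0 M_gt0)) -irls_stepE lerDr.
  by apply: sumr_ge0 => j _; rewrite mulr_ge0 ?sqnorm_ge0 ?ltW ?irls_mu_gt0.
rewrite mulr_sumr; apply: ler_sum => j _.
by rewrite ler_wpM2r ?sqnorm_ge0 ?irls_mu_le_sum.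
Qed.

Lemma sum_irls_mu_step_ge x k : p <= 2 ->
  w k * (\sum_j sqnorm (a k - a j) + eps) `^ (p / 2 - 1)
    <= \sum_j mu (step x) j.
Proof.
move=> p2; apply: le_trans (irls_mu_le_sum _ k).
rewrite /irls_mu ler_pM2l // enorm_sqr.
apply: le0_ger_powR; first by rewrite ltr_wpDl ?sqnorm_ge0.
  by rewrite lerD2r sqnorm_irls_step_le.
by rewrite subr_le0 ler_pdivrMr //= mul1r.
Qed.

End Weiszfeld.

Theorem proposition3 (R : realType) (d n : nat) (a : 'I_n -> 'rV[R]_d)
  (w : 'I_n -> R) (eps p : R) (x0 : 'rV[R]_d) :
  (1 <= d)%N -> (1 <= n)%N ->
  (forall j, 0 < w j) -> 0 < eps -> 0 < p -> p <= 2 ->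
  (fun t : nat => enorm (irls_seq a w eps p x0 t - irls_seq a w eps p x0 t.+1))
    @ \oo --> (0 : R).
Proof.
move=> _ n_gt0 w_gt0 eps_gt0 p_gt0 p_le2; pose j0 : 'I_n := Ordinal n_gt0.
set X := irls_seq a w eps p x0.
have XS t : X t.+1 = irls_step a w eps p (X t) by [].
pose c := p / 2 * (w j0 * (\sum_j sqnorm (a j0 - a j) + eps) `^ (p / 2 - 1)).
have c_gt0 : 0 < c.
  by rewrite !mulr_gt0 ?divr_gt0 ?powR_gt0 // ltr_wpDl // sumr_ge0 // => j _;
    rewrite sqnorm_ge0.
have sqnorm_cvg0 : (fun t => sqnorm (X t.+1 - X t.+2)) @ \oo --> (0 : R).
  apply: (descent_cvg0 (G := fun t => irls_obj a w eps p (X t.+1)) c_gt0).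
  - by move=> t; apply: irls_obj_ge0.
  - by move=> t; apply: sqnorm_ge0.
  move=> t; rewrite lerBrDr [X t.+2]XS.
  apply: le_trans (irls_obj_descent a w_gt0 eps_gt0 _ j0 p_gt0 p_le2).
  rewrite addrC lerD2l /c; apply: ler_wpM2r; first exact: sqnorm_ge0.
  rewrite ler_pM2l ?divr_gt0 // XS.
  exact: (sum_irls_mu_step_ge a w_gt0 eps_gt0 (X t) j0 p_le2).
rewrite -cvg_shiftS /=.
by have := cvg_comp _ _ sqnorm_cvg0 (@sqrt_continuous R 0); rewrite sqrtr0.
Qed.
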